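(* For every $n\ge2$ and $m\in\{0,1,2,3\}$ let $U_{n,m}=\sum_{k=0}^{n-2}\frac{k^m(n+k-2)!}{k!\,2^k}$ (with $0^0=1$). Then $U_{n,0}=(2n-4)!!$, $U_{n,1}=(n-1)(2n-4)!!-(2n-3)!!$, $U_{n,2}=(n^2-1)(2n-4)!!-(2n-1)(2n-3)!!$, $U_{n,3}=(n^3+3n^2-3n-1)(2n-4)!!-(3n^2+n-1)(2n-3)!!$.
   Context: Double factorials: $(2m-1)!!=(2m-1)(2m-3)\cdots3\cdot1$, $(2m)!!=(2m)(2m-2)\cdots2$, with $0!!=1$. *)

From mathcomp Require Import all_boot all_order all_algebra.
Set Implicit Arguments. Unset Strict Implicit. Unset Printing Implicit Defensive.
Import Order.TTheory GRing.Theory Num.Theory.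

Fixpoint dfact (n : nat) : nat :=
  match n with
  | 0 => 1
  | 1 => 1
  | (k.+2) as n' => n' * dfact k
  end.

Local Open Scope ring_scope.

Definition U (n m : nat) : rat :=
  \sum_(0 <= k < n.-1)
     ((k ^ m * (n + k - 2)`!)%:R / ((k`!)%:R * 2 ^+ k)).

From mathcomp Require Import all_boot all_order all_algebra.
From mathcomp Require Import ring lra zify.
Import Order.TTheory GRing.Theory Num.Theory.
Local Open Scope ring_scope.

(* With p = n - 2 and t_p(k) = (p+k)!/(k! 2^k), U_{n,m} is the moment
   M_m(p) = sum_(k <= p) k^m t_p(k).  The identity k t_p(k) = t_(p+1)(k-1)/2
   trades a factor k for a raise of p, giving
     2 M_(m+1)(p) = sum_i C(m,i) M_i(p+1) - ((p+1)^m + (p+2)^m) (2p+1)!!,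
   where (2p+1)!! = t_(p+1)(p) = t_(p+1)(p+1) comes from the boundary terms.
   For m = 0 this, together with t_(p+1)(k) = (p+1+k) t_p(k), gives
   M_0(p+1) = 2(p+1) M_0(p), so M_0(p) = (2p)!!; the recursion then yields
   M_1, M_2 and M_3 in turn. *)

Definition term (p k : nat) : rat := ((p + k)`!)%:R / ((k`!)%:R * 2 ^+ k).

Definition moment (m p : nat) : rat := \sum_(0 <= k < p.+1) k%:R ^+ m * term p k.

Definition dfact_even (p : nat) : rat := (dfact (2 * p))%:R.
Definition dfact_odd (p : nat) : rat := (dfact (2 * p).+1)%:R.

Lemma U_moment n m : U n.+2 m = moment m n.
Proof.
apply: eq_bigr => k _.
by rewrite natrM natrX /term addSn addSn subn2 /= mulrA.
Qed.

Lemma dfact_evenS p : dfact_even p.+1 = (2 * p%:R + 2) * dfact_even p.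
Proof. by rewrite /dfact_even mulnS add2n /= natrM -addn2 natrD natrM. Qed.

Lemma dfact_oddS p : dfact_odd p.+1 = (2 * p%:R + 3) * dfact_odd p.
Proof. by rewrite /dfact_odd mulnS add2n /= natrM -addn3 natrD natrM. Qed.

Lemma term_index_succ p k : term p k.+1 * k.+1%:R = term p.+1 k / 2.
Proof.
rewrite /term addnS -addSn factS natrM exprS.
have kf_neq0 : (k`!)%:R != 0 :> rat by rewrite pnatr_eq0 -lt0n fact_gt0.
by field; rewrite kf_neq0 expf_neq0 //= nat1r pnatr_eq0.
Qed.

Lemma term_param_succ p k : term p.+1 k = (p.+1 + k)%:R * term p k.
Proof. by rewrite /term addSn factS natrM mulrA. Qed.

Lemma term_diag p : term p.+1 p.+1 = term p.+1 p.
Proof.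
have p1_neq0 : p.+1%:R != 0 :> rat by rewrite pnatr_eq0.
apply: (mulIf p1_neq0).
rewrite term_index_succ term_param_succ (_ : p.+2 + p = p.+1 * 2)%N ?natrM; by [field | lia].
Qed.

Lemma term_subdiag p : term p.+1 p = dfact_odd p.
Proof.
elim: p => [|p IHp]; first by rewrite /term /dfact_odd /=; field.
rewrite term_param_succ term_diag IHp dfact_oddS addSn -!natr1 natrD; ring.
Qed.

Lemma sum_mulk_term (f : nat -> rat) p :
  \sum_(0 <= k < p.+1) k%:R * f k * term p k =
  (\sum_(0 <= j < p.+2) f j.+1 * term p.+1 j - (f p.+1 + f p.+2) * dfact_odd p) / 2.
Proof.
rewrite big_nat_recl // mul0r mul0r add0r.
have -> : \sum_(0 <= j < p) j.+1%:R * f j.+1 * term p j.+1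
          = \sum_(0 <= j < p) f j.+1 * term p.+1 j / 2.
  by apply: eq_bigr => j _; rewrite -[RHS]mulrA -term_index_succ; ring.
rewrite !big_nat_recr //= term_diag term_subdiag -mulr_suml; ring.
Qed.

Lemma moment_succ m p :
  moment m.+1 p = (\sum_(i < m.+1) moment i p.+1 *+ 'C(m, i)
                   - (p.+1%:R ^+ m + p.+2%:R ^+ m) * dfact_odd p) / 2.
Proof.
rewrite /moment (eq_bigr (fun k => k%:R * k%:R ^+ m * term p k)); last first.
  by move=> k _; rewrite exprS mulrA.
rewrite (sum_mulk_term (fun k => k%:R ^+ m)); congr ((_ - _) / 2).
rewrite (eq_bigr (fun j => \sum_(i < m.+1) (j%:R ^+ i * term p.+1 j) *+ 'C(m, i))).
  by rewrite exchange_big /=; apply: eq_bigr => i _; rewrite -sumrMnl.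
by move=> j _; rewrite -natr1 exprD1n mulr_suml; apply: eq_bigr => i _; rewrite mulrnAl.
Qed.

Lemma moment0_succ p : moment 0 p.+1 = p.+1%:R * moment 0 p + moment 1 p + dfact_odd p.
Proof.
rewrite /moment big_nat_recr //= expr0 mul1r term_diag term_subdiag mulr_sumr -big_split /=.
congr (_ + _); apply: eq_bigr => k _.
by rewrite term_param_succ natrD expr0 expr1; ring.
Qed.

Lemma moment0E p : moment 0 p = dfact_even p.
Proof.
elim: p => [|p IHp]; first by rewrite /moment big_nat1 /term /dfact_even /=; field.
have := moment0_succ p.
rewrite moment_succ big_ord_recr big_ord0 /= add0r bin0 mulr1n !expr0 IHp => rec.
rewrite dfact_evenS -natr1 in rec *; lra.
Qed.

Lemma moment1E p : moment 1 p = (p.+2%:R - 1) * dfact_even p - dfact_odd p.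
Proof.
rewrite moment_succ !big_ord_recr big_ord0 /= bin0 moment0E dfact_evenS -!natr1.
by field.
Qed.

Lemma moment2E p :
  moment 2 p = (p.+2%:R ^+ 2 - 1) * dfact_even p - (2 * p.+2%:R - 1) * dfact_odd p.
Proof.
rewrite moment_succ !big_ord_recr big_ord0 /= bin0 bin1 moment0E moment1E.
rewrite dfact_evenS dfact_oddS -!natr1.
by field.
Qed.

Lemma moment3E p :
  moment 3 p = (p.+2%:R ^+ 3 + 3 * p.+2%:R ^+ 2 - 3 * p.+2%:R - 1) * dfact_even p
               - (3 * p.+2%:R ^+ 2 + p.+2%:R - 1) * dfact_odd p.
Proof.
rewrite moment_succ !big_ord_recr big_ord0 /= bin0 bin1 binn moment0E moment1E moment2E.
rewrite dfact_evenS dfact_oddS -!natr1.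
by field.
Qed.

Theorem lemma10 (n : nat) (hn : (2 <= n)%N) :
  [/\ U n 0 = (dfact (2 * n - 4))%:R,
      U n 1 = (n%:R - 1) * (dfact (2 * n - 4))%:R - (dfact (2 * n - 3))%:R,
      U n 2 = (n%:R ^+ 2 - 1) * (dfact (2 * n - 4))%:R
              - (2 * n%:R - 1) * (dfact (2 * n - 3))%:R
    & U n 3 = (n%:R ^+ 3 + 3 * n%:R ^+ 2 - 3 * n%:R - 1) * (dfact (2 * n - 4))%:R
              - (3 * n%:R ^+ 2 + n%:R - 1) * (dfact (2 * n - 3))%:R :> rat].
Proof.
case: n hn => [|[|p]] // _.
have -> : (2 * p.+2 - 4 = 2 * p)%N by lia.
have -> : (2 * p.+2 - 3 = (2 * p).+1)%N by lia.
by rewrite !U_moment moment0E moment1E moment2E moment3E.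
Qed.
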